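(* Consider two-level PFASST for a linear problem with Gauss–Radau nodes as described in the context, with preconditioning using the LU trick, and assume $\mathbf{A}$ and $\tilde{\mathbf{A}}$ are invertible. For $k\in\mathbb{N}$ smoothing steps let $\mathbf{T}_{\mathrm{PFASST}}(\mu,k)=\big(\mathbf{T}_S(\mu)\big)^k\,\mathbf{T}_{\mathrm{CGC}}(\mu)$. Then PFASST converges if $\mu$ is large enough and at least $M$ smoothing steps are performed: for every $k\ge M$ there exist a fixed value $\mu^*_\infty>0$ and a constant $c>0$ independent of $\mu$ (but depending on $k$) such that for all $\mu>\mu^*_\infty$, $$\rho\big(\mathbf{T}_{\mathrm{PFASST}}(\mu,k)\big)\le\frac{c}{\mu}.$$
   Context: Fix positive integers $L$ (time steps), $M$ (collocation nodes), $N$ (spatial degrees of freedom). Let $0<\tau_1<\dots<\tau_M=1$ be the (right) Gauss–Radau nodes on $[0,1]$, $\ell_j$ the Lagrange basis polynomials, $\mathbf{Q}=(q_{m,j})$ with $q_{m,j}=\int_0^{\tau_m}\ell_j(s)\,ds$. LU trick: $\mathbf{Q}^T=\mathbf{L}_Q\mathbf{U}_Q$ with $\mathbf{L}_Q$ unit lower triangular, $\mathbf{U}_Q$ upper triangular, and $\mathbf{Q}_\Delta=\mathbf{U}_Q^T$; on the coarse level, with $\tilde M\le M$ coarse Gauss–Radau nodes and corresponding collocation matrix $\tilde{\mathbf{Q}}$, analogously $\tilde{\mathbf{Q}}_\Delta$ is obtained from the LU decomposition of $\tilde{\mathbf{Q}}^T$. Let $\mathbf{A}\in\mathbb{C}^{N\times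 N}$, $\tilde{\mathbf{A}}\in\mathbb{C}^{\tilde N\times\tilde N}$ ($\tilde N\le N$), $\mu>0$. Let $\mathbf{N}_M$ ($M\times M$) and $\tilde{\mathbf{N}}_{\tilde M}$ ($\tilde M\times\tilde M$) have ones in their last column and zeros elsewhere, $\mathbf{H}=\mathbf{N}_M\otimes\mathbf{I}_N$, $\tilde{\mathbf{H}}=\tilde{\mathbf{N}}_{\tilde M}\otimes\mathbf{I}_{\tilde N}$, $\mathbf{E}\in\mathbb{R}^{L\times L}$ with ones on the first subdiagonal and zeros elsewhere. $\mathbf{C}=\mathbf{I}_{LMN}-\mu\,\mathbf{I}_L\otimes\mathbf{Q}\otimes\mathbf{A}-\mathbf{E}\otimes\mathbf{H}$, $\hat{\mathbf{P}}=\mathbf{I}_{LMN}-\mu\,\mathbf{I}_L\otimes\mathbf{Q}_\Delta\otimes\mathbf{A}$, $\tilde{\mathbf{P}}=\mathbf{I}_{L\tilde M\tilde N}-\mu\,\mathbf{I}_L\otimes\tilde{\mathbf{Q}}_\Delta\otimes\tilde{\mathbf{A}}-\mathbf{E}\otimes\tilde{\mathbf{H}}$, both assumed invertible. Restriction $\mathbf{T}_F^C=\mathbf{I}_L\otimes\mathbf{T}_{F,Q}^C\otimes\mathbf{T}_{F,A}^C\in\mathbb{R}^{L\tilde M\tilde N\times LMN}$ and interpolation $\mathbf{T}_C^F=\mathbf{I}_L\otimes\mathbf{T}_{C,Q}^F\otimes\mathbf{T}_{C,A}^F\in\mathbb{R}^{LMN\times L\tilde M\tilde N}$, with $(\mathbf{E}\otimes\tilde{\mathbf{H}})\mathbf{T}_F^C=\mathbf{T}_F^C(\mathbf{E}\otimes\mathbf{H})$.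 $\mathbf{T}_S(\mu)=\mathbf{I}_{LMN}-\hat{\mathbf{P}}^{-1}\mathbf{C}$ and $\mathbf{T}_{\mathrm{CGC}}(\mu)=\mathbf{I}_{LMN}-\mathbf{T}_C^F\tilde{\mathbf{P}}^{-1}\mathbf{T}_F^C\mathbf{C}$. $\rho$ is the spectral radius. *)

From HB Require Import structures.
From mathcomp Require Import all_boot all_order all_algebra.
From mathcomp Require Import reals.
From mathcomp Require Import complex mxtens.
Set Implicit Arguments.
Unset Strict Implicit.
Unset Printing Implicit Defensive.
Import Order.TTheory GRing.Theory Num.Theory.
Local Open Scope ring_scope.

Section Defs.
Variable R : realType.
Local Notation C := R[i].

Definition poly_int0 (p : {poly R}) (t : R) : R :=
  \sum_(i < size p) p`_i * t ^+ i.+1 / i.+1%:R.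

Definition lagrange_basis (M : nat) (tau : 'I_M -> R) (j : 'I_M) : {poly R} :=
  \prod_(k < M | k != j) (('X - (tau k)%:P) * ((tau j - tau k)^-1)%:P).

Definition colloc_matrix (M : nat) (tau : 'I_M -> R) : 'M[R]_M :=
  \matrix_(m, j) poly_int0 (lagrange_basis tau j) (tau m).

Definition right_gauss_radau (M : nat) (tau : 'I_M -> R) : Prop :=
  [/\ (0 < M)%N,
      (forall i j : 'I_M, (i < j)%N -> tau i < tau j),
      (forall i : 'I_M, 0 < tau i),
      (forall i : 'I_M, i.+1 = M -> tau i = 1) &
      exists w : 'I_M -> R, forall p : {poly R}, (size p <= 2 * M - 1)%N ->
        poly_int0 p 1 = \sum_(j < M) w j * p.[tau j]].

Definition unit_lower_triangular (n : nat) (A : 'M[R]_n) : Prop :=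
  (forall i j : 'I_n, (i < j)%N -> A i j = 0) /\ (forall i, A i i = 1).

Definition upper_triangular (n : nat) (A : 'M[R]_n) : Prop :=
  forall i j : 'I_n, (j < i)%N -> A i j = 0.

Definition cplx_mx (m n : nat) (A : 'M[R]_(m, n)) : 'M[C]_(m, n) :=
  map_mx (real_complex R) A.

Definition lastcol_mx (n : nat) : 'M[C]_n := \matrix_(i, j) (j.+1 == n)%:R.

Definition subdiag_mx (n : nat) : 'M[C]_n := \matrix_(i, j) (i == j.+1 :> nat)%:R.

Definition Hmat (M N : nat) : 'M[C]_(M * N) := lastcol_mx M *t (1%:M : 'M[C]_N).

(* All Kronecker products are bracketed as I_L (x) (X (x) Y),
   i.e. the global index is (l, (m, n)) in lexicographic order. *)

Definition Cmat (L M N : nat) (mu : R) (Q : 'M[R]_M) (A : 'M[C]_N)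
  : 'M[C]_(L * (M * N)) :=
  1%:M - (mu%:C)%C *: ((1%:M : 'M[C]_L) *t (cplx_mx Q *t A))
       - subdiag_mx L *t @Hmat M N.

Definition Phat (L M N : nat) (mu : R) (QD : 'M[R]_M) (A : 'M[C]_N)
  : 'M[C]_(L * (M * N)) :=
  1%:M - (mu%:C)%C *: ((1%:M : 'M[C]_L) *t (cplx_mx QD *t A)).

Definition Ptilde (L Mc Nc : nat) (mu : R) (QDc : 'M[R]_Mc) (Ac : 'M[C]_Nc)
  : 'M[C]_(L * (Mc * Nc)) :=
  1%:M - (mu%:C)%C *: ((1%:M : 'M[C]_L) *t (cplx_mx QDc *t Ac))
       - subdiag_mx L *t @Hmat Mc Nc.

Definition transfer (L p q r s : nat) (TQ : 'M[R]_(p, q)) (TA : 'M[R]_(r, s))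
  : 'M[C]_(L * (p * r), L * (q * s)) :=
  (1%:M : 'M[C]_L) *t (cplx_mx TQ *t cplx_mx TA).

Definition T_S (L M N : nat) (mu : R) (Q QD : 'M[R]_M) (A : 'M[C]_N)
  : 'M[C]_(L * (M * N)) :=
  1%:M - invmx (@Phat L M N mu QD A) *m @Cmat L M N mu Q A.

Definition T_CGC (L M N Mc Nc : nat) (mu : R) (Q : 'M[R]_M) (A : 'M[C]_N)
  (QDc : 'M[R]_Mc) (Ac : 'M[C]_Nc)
  (TFC : 'M[C]_(L * (Mc * Nc), L * (M * N)))
  (TCF : 'M[C]_(L * (M * N), L * (Mc * Nc))) : 'M[C]_(L * (M * N)) :=
  1%:M - TCF *m invmx (@Ptilde L Mc Nc mu QDc Ac) *m TFC *m @Cmat L M N mu Q A.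

Definition T_PFASST (L M N Mc Nc : nat) (mu : R) (k : nat)
  (Q QD : 'M[R]_M) (A : 'M[C]_N) (QDc : 'M[R]_Mc) (Ac : 'M[C]_Nc)
  (TFC : 'M[C]_(L * (Mc * Nc), L * (M * N)))
  (TCF : 'M[C]_(L * (M * N), L * (Mc * Nc))) : 'M[C]_(L * (M * N)) :=
  (@T_S L M N mu Q QD A) ^+ k *m @T_CGC L M N Mc Nc mu Q A QDc Ac TFC TCF.

Definition spectral_radius (n : nat) (A : 'M[C]_n) : R :=
  \big[Num.max/0]_(z <- sval (closed_field_poly_normal (char_poly A))) ComplexField.Normc.normc z.

End Defs.

Arguments Cmat {R} L {M N} mu Q A.
Arguments Phat {R} L {M N} mu QD A.
Arguments Ptilde {R} L {Mc Nc} mu QDc Ac.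
Arguments transfer {R} L {p q r s} TQ TA.
Arguments T_S {R} L {M N} mu Q QD A.
Arguments T_CGC {R} L {M N Mc Nc} mu Q A QDc Ac TFC TCF.
Arguments T_PFASST {R} L {M N Mc Nc} mu k Q QD A QDc Ac TFC TCF.
Arguments Hmat {R} M N.
Arguments subdiag_mx {R} n.
Arguments lastcol_mx {R} n.

(* Write P^ = I - mu D and C = I - mu G - B, where D = I_L (x) Q_Delta (x) A,
   G = I_L (x) Q (x) A and B = E (x) H.  Since D is invertible, P^^-1 = O(1/mu),
   and with K := I - D^-1 G one has T_S(mu) = K + P^^-1 (B - K) = K + O(1/mu).
   The LU trick gives D^-1 G = I_L (x) L_Q^T (x) I_N with L_Q^T unit upper
   triangular, so K^M = 0 and T_S(mu)^k = O(1/mu) for k >= M.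
   The coarse-grid correction stays bounded, because P~^-1 = O(1/mu) compensates
   C = O(mu).  The spectral radius is bounded by the (submultiplicative)
   entrywise l1 norm, whence rho(T_PFASST) <= c/mu.  Invertibility of Q, needed
   for that of U_Q, holds for any distinct nonzero nodes: if Q v = 0, the
   primitive of sum_j v_j l_j has degree <= M and vanishes at 0 and at the
   M nodes, so it is zero. *)

From HB Require Import structures.
From mathcomp Require Import all_boot all_order all_algebra.
From mathcomp Require Import reals.
From mathcomp Require Import complex mxtens.
From mathcomp Require Import lra zify.
Set Implicit Arguments. Unset Strict Implicit. Unset Printing Implicit Defensive.
Import Order.TTheory GRing.Theory Num.Theory.
Local Open Scope ring_scope.

Section EntrywiseNorm.
Variable R : realType.
Local Notation C := R[i].
Local Notation normc := (@ComplexField.Normc.normc R).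

Lemma normc_ge0 (z : C) : 0 <= normc z.
Proof. by case: z => a b; rewrite /= sqrtr_ge0. Qed.

Lemma normc_sum I (r : seq I) (P : pred I) (F : I -> C) :
  normc (\sum_(i <- r | P i) F i) <= \sum_(i <- r | P i) normc (F i).
Proof.
elim/big_rec2: _ => [|i y z _ IH]; first by rewrite ComplexField.Normc.normc0.
by apply: le_trans (le_normcD _ _) _; rewrite lerD2l.
Qed.

Lemma normc_real (x : R) : 0 <= x -> normc (x%:C)%C = x.
Proof. by move=> x_ge0; rewrite /= expr0n /= addr0 sqrtr_sqr ger0_norm. Qed.

Definition mxnorm m n (A : 'M[C]_(m, n)) : R := \sum_i \sum_j normc (A i j).

Lemma mxnorm_ge0 m n (A : 'M[C]_(m, n)) : 0 <= mxnorm A.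
Proof. by do 2!apply: sumr_ge0 => ? _; apply: normc_ge0. Qed.

Lemma mxnorm_eq0 m n (A : 'M[C]_(m, n)) : mxnorm A = 0 -> A = 0.
Proof.
move=> A0; apply/matrixP => i j; rewrite mxE.
have /psumr_eq0P row0 : \sum_j normc (A i j) = 0.
  by apply: (psumr_eq0P _ A0) => // k _; apply: sumr_ge0 => l _; apply: normc_ge0.
by apply: ComplexField.Normc.eq0_normc; apply: row0 => // k _; apply: normc_ge0.
Qed.

Lemma mxnormD m n (A B : 'M[C]_(m, n)) : mxnorm (A + B) <= mxnorm A + mxnorm B.
Proof.
rewrite /mxnorm -big_split; apply: ler_sum => i _.
by rewrite -big_split; apply: ler_sum => j _; rewrite mxE; apply: le_normcD.
Qed.

Lemma mxnormN m n (A : 'M[C]_(m, n)) : mxnorm (- A) = mxnorm A.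
Proof. by apply: eq_bigr => i _; apply: eq_bigr => j _; rewrite mxE normcN. Qed.

Lemma mxnormB m n (A B : 'M[C]_(m, n)) : mxnorm (A - B) <= mxnorm A + mxnorm B.
Proof. by rewrite -(mxnormN B) mxnormD. Qed.

Lemma mxnormZ m n (a : C) (A : 'M[C]_(m, n)) : mxnorm (a *: A) = normc a * mxnorm A.
Proof.
rewrite /mxnorm mulr_sumr; apply: eq_bigr => i _; rewrite mulr_sumr.
by apply: eq_bigr => j _; rewrite mxE ComplexField.Normc.normcM.
Qed.

Lemma mxnorm0 m n : mxnorm (0 : 'M[C]_(m, n)) = 0.
Proof. by rewrite -(scale0r 0) mxnormZ ComplexField.Normc.normc0 mul0r. Qed.

Lemma mxnormM m n p (A : 'M[C]_(m, n)) (B : 'M[C]_(n, p)) :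
  mxnorm (A *m B) <= mxnorm A * mxnorm B.
Proof.
rewrite /mxnorm mulr_suml; apply: ler_sum => i _.
apply: (@le_trans _ _ (\sum_j \sum_k normc (A i k) * normc (B k j))).
  apply: ler_sum => j _; rewrite mxE; apply: le_trans (normc_sum _ _ _) _.
  by apply: ler_sum => k _; rewrite ComplexField.Normc.normcM.
rewrite exchange_big mulr_suml; apply: ler_sum => k _.
rewrite -mulr_sumr ler_wpM2l ?normc_ge0 // (bigD1 k) //= lerDl.
by do 2!apply: sumr_ge0 => ? _; apply: normc_ge0.
Qed.

Lemma mxnorm1 n : mxnorm (1%:M : 'M[C]_n) = n%:R.
Proof.
rewrite /mxnorm -[n in RHS]card_ord -sumr_const; apply: eq_bigr => i _.
rewrite (bigD1 i) //= big1 => [|j /negbTE ji]; last first.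
  by rewrite mxE eq_sym ji ComplexField.Normc.normc0.
by rewrite mxE eqxx ComplexField.Normc.normc1 addr0.
Qed.

Lemma mxnormX n (A : 'M[C]_n) k : mxnorm (A ^+ k) <= n%:R * mxnorm A ^+ k.
Proof.
elim: k => [|k IH]; first by rewrite !expr0 mulr1 mxnorm1.
rewrite exprS -mulmxE exprS mulrCA.
by apply: le_trans (mxnormM _ _) _; rewrite ler_wpM2l ?mxnorm_ge0.
Qed.

Lemma eigenvalue_normc_le n (A : 'M[C]_n) z :
  root (char_poly A) z -> normc z <= mxnorm A.
Proof.
rewrite -eigenvalue_root_char => /eigenvalueP [v vA v_neq0].
have v_gt0 : 0 < mxnorm v.
  by rewrite lt_def mxnorm_ge0 andbT; apply: contra v_neq0 => /eqP/mxnorm_eq0->.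
by rewrite -(ler_pM2r v_gt0) -mxnormZ -vA mulrC mxnormM.
Qed.

Lemma spectral_radius_le_mxnorm n (A : 'M[C]_n) : spectral_radius A <= mxnorm A.
Proof.
rewrite /spectral_radius; case: closed_field_poly_normal => s /= charA.
rewrite big_seq; apply: (big_ind (fun x => x <= mxnorm A)); first exact: mxnorm_ge0.
  by move=> x y xA yA; rewrite ge_max xA yA.
move=> z zs; apply: eigenvalue_normc_le.
by rewrite charA rootZ ?root_prod_XsubC // (monicP (char_poly_monic A)) oner_eq0.
Qed.

End EntrywiseNorm.

Section Perturbation.
Variables (R : realType) (n : nat).
Local Notation C := R[i].
Implicit Types (mu : R) (B D Dinv K X : 'M[C]_n).

Lemma mxnorm_invmx_affine B D Dinv mu :
  D *m Dinv = 1%:M -> 0 < mu -> (B - (mu%:C)%C *: D) \in unitmx ->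
  2 * mxnorm B * mxnorm Dinv <= mu ->
  mxnorm (invmx (B - (mu%:C)%C *: D)) <= 2 * n%:R * mxnorm Dinv / mu.
Proof.
move=> DK mu_gt0 P_unit mu_ge; set Pi := invmx _.
have PiK : Pi *m B - (mu%:C)%C *: (Pi *m D) = 1%:M.
  by rewrite scalemxAr -mulmxBr mulVmx.
have muPi : (mu%:C)%C *: Pi = (Pi *m B - 1%:M) *m Dinv.
  by rewrite -[in RHS]PiK opprB addrC subrK -scalemxAl -mulmxA DK mulmx1.
have : mu * mxnorm Pi <= (mxnorm Pi * mxnorm B + n%:R) * mxnorm Dinv.
  rewrite -[X in X * _](normc_real (ltW mu_gt0)) -mxnormZ muPi.
  apply: le_trans (mxnormM _ _) _; rewrite ler_wpM2r ?mxnorm_ge0 //.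
  by apply: le_trans (mxnormB _ _) _; rewrite mxnorm1 lerD2r mxnormM.
rewrite ler_pdivlMr //.
have := mxnorm_ge0 Pi; have := mxnorm_ge0 B; have := mxnorm_ge0 Dinv.
by have := ler0n R n; nra.
Qed.

Lemma mxnormXB X K (a r : R) k :
  1 <= a -> mxnorm X <= a -> mxnorm K <= a -> mxnorm (X - K) <= r ->
  mxnorm (X ^+ k - K ^+ k) <= k%:R * n%:R * a ^+ k * r.
Proof.
move=> a_ge1 Xa Ka XKr.
have r_ge0 : 0 <= r := le_trans (mxnorm_ge0 _) XKr.
have a_ge0 : 0 <= a := le_trans ler01 a_ge1.
have Kj_le j : mxnorm (K ^+ j) <= n%:R * a ^+ j.
  apply: le_trans (mxnormX _ _) _.
  by rewrite ler_wpM2l // lerXn2r ?nnegrE ?mxnorm_ge0.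
elim: k => [|k IH]; first by rewrite !expr0 subrr mxnorm0 !mul0r.
have -> : X ^+ k.+1 - K ^+ k.+1 = X *m (X ^+ k - K ^+ k) + (X - K) *m K ^+ k.
  by rewrite !exprS -!mulmxE mulmxBr mulmxBl addrA subrK.
apply: le_trans (mxnormD _ _) _.
have XE := le_trans (mxnormM _ _) (ler_pM (mxnorm_ge0 _) (mxnorm_ge0 _) Xa IH).
have EK := le_trans (mxnormM _ _) (ler_pM (mxnorm_ge0 _) (mxnorm_ge0 _) XKr (Kj_le k)).
apply: le_trans (lerD XE EK) _.
have : 0 <= n%:R * a ^+ k * r * (a - 1) by rewrite !mulr_ge0 ?exprn_ge0 ?subr_ge0.
by rewrite exprS -natr1; have := ler0n R k; nra.
Qed.

End Perturbation.

Section TwoLevelIteration.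
Variables (R : realType) (n nc : nat).
Local Notation C := R[i].
Variables (D Dinv G B : 'M[C]_n) (Dc Dcinv Bc : 'M[C]_nc).
Variables (TFC : 'M[C]_(nc, n)) (TCF : 'M[C]_(n, nc)).
Hypotheses (DK : D *m Dinv = 1%:M) (DcK : Dc *m Dcinv = 1%:M).

Local Notation Pfine mu := (1%:M - (mu%:C)%C *: D).
Local Notation Pcoarse mu := (1%:M - (mu%:C)%C *: Dc - Bc).
Local Notation Csys mu := (1%:M - (mu%:C)%C *: G - B).
Local Notation Tsmooth mu := (1%:M - invmx (Pfine mu) *m Csys mu).
Local Notation Tcgc mu := (1%:M - TCF *m invmx (Pcoarse mu) *m TFC *m Csys mu).
Local Notation K := (1%:M - Dinv *m G).

Lemma smoother_decomp mu :
  Pfine mu \in unitmx -> Tsmooth mu = K + invmx (Pfine mu) *m (B - K).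
Proof.
move=> P_unit; set Pi := invmx _.
have PK : Pfine mu *m K = K - (mu%:C)%C *: (D - G).
  by rewrite mulmxBl mul1mx -scalemxAl mulmxBr mulmx1 mulmxA DK mul1mx.
have K_eq : K = Pi *m (K - (mu%:C)%C *: (D - G)) by rewrite -PK mulmxA mulVmx ?mul1mx.
have PC : Pfine mu - Csys mu = B - (mu%:C)%C *: (D - G).
  rewrite scalerBr !opprB addrAC addrCA [X in B + X - _]addrC [RHS]addrA.
  by congr (_ + _ - _); apply: subrK.
have Tsmooth_eq : Tsmooth mu = Pi *m (B - (mu%:C)%C *: (D - G)).
  by rewrite -{1}(mulVmx P_unit) -mulmxBr PC.
rewrite Tsmooth_eq {1}K_eq -mulmxDr [in RHS]addrC [in RHS]addrA.
by congr (_ *m (_ - _)); apply/esym/subrK.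
Qed.

Let cS := 2 * n%:R * mxnorm Dinv * (mxnorm B + mxnorm K).

Lemma smoother_deviation mu :
  0 < mu -> Pfine mu \in unitmx -> 2 * n%:R * mxnorm Dinv <= mu ->
  mxnorm (Tsmooth mu - K) <= cS / mu.
Proof.
move=> mu_gt0 P_unit mu_ge; rewrite smoother_decomp // addrC addKr.
have Pi_le := mxnorm_invmx_affine DK mu_gt0 P_unit.
rewrite mxnorm1 in Pi_le; have {}Pi_le := Pi_le mu_ge.
apply: le_trans (mxnormM _ _) _; rewrite /cS mulrAC.
by apply: ler_pM; rewrite ?mxnorm_ge0 ?mxnormB.
Qed.

Lemma smoother_power_bound k mu :
  K ^+ k = 0 -> 0 < mu -> Pfine mu \in unitmx ->
  2 * n%:R * mxnorm Dinv <= mu -> cS <= mu ->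
  mxnorm (Tsmooth mu ^+ k) <= k%:R * n%:R * (mxnorm K + 1) ^+ k * cS / mu.
Proof.
move=> Kk0 mu_gt0 P_unit mu_ge1 mu_ge2.
have dev := smoother_deviation mu_gt0 P_unit mu_ge1.
have dev_le1 : cS / mu <= 1 by rewrite ler_pdivrMr ?mul1r.
have Tsmooth_le : mxnorm (Tsmooth mu) <= mxnorm K + 1.
  rewrite -[Tsmooth mu](subrK K) addrC.
  by apply: le_trans (mxnormD _ _) _; rewrite lerD2l (le_trans dev).
have a_ge1 : 1 <= mxnorm K + 1 by rewrite lerDr mxnorm_ge0.
have K_le : mxnorm K <= mxnorm K + 1 by rewrite lerDl.
have := mxnormXB k a_ge1 Tsmooth_le K_le dev.
by rewrite Kk0 subr0 mulrA.
Qed.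

Let cC := n%:R + mxnorm TCF * mxnorm TFC * (2 * nc%:R * mxnorm Dcinv)
                 * (n%:R + mxnorm G + mxnorm B).

Lemma coarse_correction_bound mu :
  1 <= mu -> Pcoarse mu \in unitmx ->
  2 * mxnorm (1%:M - Bc) * mxnorm Dcinv <= mu ->
  mxnorm (Tcgc mu) <= cC.
Proof.
move=> mu_ge1 P_unit mu_ge.
have mu_gt0 : 0 < mu := lt_le_trans ltr01 mu_ge1.
have Pi_le : mxnorm (invmx (Pcoarse mu)) * mu <= 2 * nc%:R * mxnorm Dcinv.
  have Pc_eq : Pcoarse mu = (1%:M - Bc) - (mu%:C)%C *: Dc by rewrite addrAC.
  by rewrite -ler_pdivlMr // Pc_eq; apply: mxnorm_invmx_affine; rewrite -?Pc_eq.
have Csys_le : mxnorm (Csys mu) <= mu * (n%:R + mxnorm G + mxnorm B).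
  apply: le_trans (mxnormB _ _) _; apply: le_trans (lerD (mxnormB _ _) (lexx _)) _.
  rewrite mxnorm1 mxnormZ normc_real ?(ltW mu_gt0) //.
  by have := ler0n R n; have := mxnorm_ge0 G; have := mxnorm_ge0 B; nra.
have PiC_le : mxnorm (invmx (Pcoarse mu)) * mxnorm (Csys mu)
    <= 2 * nc%:R * mxnorm Dcinv * (n%:R + mxnorm G + mxnorm B).
  apply: le_trans (ler_wpM2l (mxnorm_ge0 _) Csys_le) _.
  by rewrite mulrA ler_wpM2r // !addr_ge0 ?mxnorm_ge0.
have prod_le : mxnorm (TCF *m invmx (Pcoarse mu) *m TFC *m Csys mu)
    <= mxnorm TCF * mxnorm (invmx (Pcoarse mu)) * mxnorm TFC * mxnorm (Csys mu).
  by do 3!(apply: le_trans (mxnormM _ _) _; rewrite ler_wpM2r ?mxnorm_ge0 //).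
apply: le_trans (mxnormB _ _) _; rewrite mxnorm1 lerD2l (le_trans prod_le) //.
rewrite [_ * mxnorm TFC]mulrAC -[_ * _ * mxnorm (Csys mu)]mulrA -[X in _ <= X]mulrA.
by rewrite ler_wpM2l ?mulr_ge0 ?mxnorm_ge0.
Qed.

Lemma two_level_spectral_radius_bound k : K ^+ k = 0 ->
  exists mu_star c : R, 0 < mu_star /\ 0 < c /\
    forall mu, mu_star < mu -> Pfine mu \in unitmx -> Pcoarse mu \in unitmx ->
      spectral_radius (Tsmooth mu ^+ k *m Tcgc mu) <= c / mu.
Proof.
move=> Kk0.
set q := k%:R * n%:R * (mxnorm K + 1) ^+ k * cS.
set d := 2 * n%:R * mxnorm Dinv; set dc := 2 * mxnorm (1%:M - Bc) * mxnorm Dcinv.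
have cS_ge0 : 0 <= cS by rewrite !mulr_ge0 ?addr_ge0 ?mxnorm_ge0.
have q_ge0 : 0 <= q by rewrite !mulr_ge0 ?exprn_ge0 ?addr_ge0 ?mxnorm_ge0.
have cC_ge0 : 0 <= cC by rewrite !(addr_ge0, mulr_ge0) ?mxnorm_ge0.
have d_ge0 : 0 <= d by rewrite !mulr_ge0 ?mxnorm_ge0.
have dc_ge0 : 0 <= dc by rewrite !mulr_ge0 ?mxnorm_ge0.
have qcC_ge0 : 0 <= q * cC by rewrite mulr_ge0.
exists (1 + d + cS + dc), (q * cC + 1); split; [lra | split; first lra].
move=> mu mu_gt P_unit Pc_unit.
have [mu_gt0 mu_ge1 d_le cS_le dc_le] :
  [/\ 0 < mu, 1 <= mu, d <= mu, cS <= mu & dc <= mu] by split; lra.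
have Tsmooth_le : mxnorm (Tsmooth mu ^+ k) <= q / mu by apply: smoother_power_bound.
have Tcgc_le : mxnorm (Tcgc mu) <= cC by apply: coarse_correction_bound.
apply: le_trans (spectral_radius_le_mxnorm _) _.
apply: le_trans (mxnormM _ _) _.
apply: le_trans (ler_pM (mxnorm_ge0 _) (mxnorm_ge0 _) Tsmooth_le Tcgc_le) _.
by rewrite mulrAC ler_pM2r ?invr_gt0 // lerDl.
Qed.

End TwoLevelIteration.

Section PolyPrimitive.
Variable R : realType.
Implicit Types (p : {poly R}) (K : nat).

Definition poly_primitive K p : {poly R} :=
  \sum_(i < K) (p`_i / i.+1%:R) *: 'X^(i.+1).

Lemma horner_poly_primitive K p t :
  (size p <= K)%N -> (poly_primitive K p).[t] = poly_int0 p t.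
Proof.
move=> pK; rewrite horner_sum /poly_int0.
rewrite (big_ord_widen K (fun i => p`_i * t ^+ i.+1 / i.+1%:R)) // [RHS]big_mkcond.
apply: eq_bigr => i _; rewrite hornerZ hornerXn mulrAC.
by case: ltnP => // pi; rewrite nth_default // !mul0r.
Qed.

Lemma root_poly_primitive0 K p : root (poly_primitive K p) 0.
Proof.
by rewrite rootE horner_sum big1 // => i _; rewrite hornerZ hornerXn expr0n mulr0.
Qed.

Lemma size_poly_primitive K p : (size (poly_primitive K p) <= K.+1)%N.
Proof.
apply: (big_ind (fun q : {poly R} => (size q <= K.+1)%N)) => [|q r qK rK|i _].
- by rewrite size_poly0.
- by apply: leq_trans (size_polyD _ _) _; rewrite geq_max qK rK.
- by apply: leq_trans (size_scale_leq _ _) _; rewrite size_polyXn ltnS.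
Qed.

Lemma deriv_poly_primitive K p : (size p <= K)%N -> (poly_primitive K p)^`() = p.
Proof.
move=> pK; rewrite -[RHS](take_poly_id pK) /take_poly poly_def linear_sum.
apply: eq_bigr => i _; rewrite /= derivZ derivXn -scalerMnr scalerMnl.
by rewrite -mulr_natr divfK ?pnatr_eq0.
Qed.

End PolyPrimitive.

Lemma increasing_ord_inj (R : numDomainType) M (f : 'I_M -> R) :
  (forall i j : 'I_M, (i < j)%N -> f i < f j) -> injective f.
Proof.
move=> f_lt i j fij; apply/val_inj.
by case: (ltngtP i j) => // ij; have := f_lt _ _ ij; rewrite fij ltxx.
Qed.

Section Collocation.
Variables (R : realType) (M : nat) (tau : 'I_M -> R).
Hypotheses (tau_inj : injective tau) (tau_neq0 : forall m, tau m != 0).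

Lemma horner_lagrange_basis j m : (lagrange_basis tau j).[tau m] = (m == j)%:R.
Proof.
rewrite /lagrange_basis horner_prod.
under eq_bigr => k _ do rewrite hornerM hornerXsubC hornerC.
have [->|mj] := eqVneq m j; last by rewrite (bigD1 m) //= subrr !mul0r.
rewrite big1 // => k kj; rewrite divff // subr_eq0.
by apply: contra kj => /eqP/tau_inj->.
Qed.

Lemma size_lagrange_basis j : (size (lagrange_basis tau j) <= M)%N.
Proof.
rewrite /lagrange_basis big_split /= -rmorph_prod mulrC mul_polyC.
apply: leq_trans (size_scale_leq _ _) _.
rewrite -big_filter size_prod_XsubC size_filter -sum1_count sum1_card cardC1.
by rewrite card_ord; case: M j => [[]|].
Qed.

Lemma colloc_matrix_unit : colloc_matrix tau \in unitmx.
Proof.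
rewrite -unitmx_tr unitmxE unitfE; apply/negP => /det0P [v v_neq0 vQ].
case/eqP: v_neq0; apply/rowP => m; rewrite mxE.
pose p := \sum_j v 0 j *: lagrange_basis tau j.
pose P := \sum_j v 0 j *: poly_primitive M (lagrange_basis tau j).
have P'_eq : P^`() = p.
  rewrite linear_sum; apply: eq_bigr => j _.
  by rewrite /= derivZ deriv_poly_primitive ?size_lagrange_basis.
have P_root_tau k : root P (tau k).
  have /rowP/(_ k) := vQ; rewrite !mxE => vQk.
  rewrite rootE horner_sum -[X in _ == X]vQk; apply/eqP/eq_bigr => j _.
  by rewrite hornerZ horner_poly_primitive ?size_lagrange_basis // !mxE.
have P_root0 : root P 0.
  rewrite rootE horner_sum big1 // => j _.
  by rewrite hornerZ (eqP (root_poly_primitive0 _ _)) mulr0.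
have P_eq0 : P = 0.
  apply: (@roots_geq_poly_eq0 _ _ (0 :: map tau (enum 'I_M))).
  - by rewrite /= P_root0; apply/allP => _ /mapP [k _ ->].
  - rewrite /= map_inj_uniq ?enum_uniq // andbT; apply/mapP => -[k _ /esym].
    exact/eqP/tau_neq0.
  - rewrite /= size_map size_enum_ord (leq_trans (size_sum _ _ _)) //.
    apply/bigmax_leqP => j _.
    by rewrite (leq_trans (size_scale_leq _ _)) ?size_poly_primitive.
have : p.[tau m] = 0 by rewrite -P'_eq P_eq0 deriv0 horner0.
rewrite horner_sum (bigD1 m) //= hornerZ horner_lagrange_basis eqxx mulr1 big1 ?addr0 //.
by move=> j jm; rewrite hornerZ horner_lagrange_basis eq_sym (negbTE jm) mulr0.
Qed.

End Collocation.

Lemma gauss_radau_colloc_unit (R : realType) M (tau : 'I_M -> R) :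
  right_gauss_radau tau -> colloc_matrix tau \in unitmx.
Proof.
case=> _ tau_lt tau_gt0 _ _; apply: colloc_matrix_unit => [|m].
  exact: increasing_ord_inj.
exact: lt0r_neq0.
Qed.

Section Tensor.
Variable F : comPzRingType.

Lemma tensmx11 m n : (1%:M : 'M[F]_m) *t (1%:M : 'M[F]_n) = 1%:M.
Proof.
apply/matrixP => i j.
case: (mxtens_indexP i) => i0 i1; case: (mxtens_indexP j) => j0 j1.
rewrite tensmxE !mxE -natrM mulnb.
by rewrite (inj_eq (can_inj (@mxtens_indexK _ _))) xpair_eqE.
Qed.

Lemma tensmxBl m n p q (A B : 'M[F]_(m, n)) (C : 'M[F]_(p, q)) :
  (A - B) *t C = A *t C - B *t C.
Proof. by apply/matrixP => i j; rewrite !mxE mulrBl. Qed.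

Lemma tensmxBr m n p q (A : 'M[F]_(m, n)) (B C : 'M[F]_(p, q)) :
  A *t (B - C) = A *t B - A *t C.
Proof. by apply/matrixP => i j; rewrite !mxE mulrBr. Qed.

Lemma tensmx_exp m n (A : 'M[F]_m) (B : 'M[F]_n) k :
  (A *t B) ^+ k = A ^+ k *t B ^+ k.
Proof.
elim: k => [|k IH]; first by rewrite !expr0 tensmx11.
by rewrite !exprS -!mulmxE IH tensmx_mul.
Qed.

End Tensor.

Section StrictlyUpper.
Variables (F : pzRingType) (M : nat) (Y : 'M[F]_M).
Hypothesis Y_upper : forall i j : 'I_M, (j <= i)%N -> Y i j = 0.

Lemma strictly_upper_exp_entry k (i j : 'I_M) :
  (j < i + k)%N -> (Y ^+ k) i j = 0.
Proof.
elim: k i j => [|k IH] i j jik.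
  by rewrite expr0 mxE; case: eqVneq => // ij; rewrite ij addn0 ltnn in jik.
rewrite exprS -mulmxE mxE big1 // => l _.
have [li|il] := leqP l i; first by rewrite Y_upper ?mul0r.
by rewrite IH ?mulr0 //; move: il jik; lia.
Qed.

Lemma strictly_upper_nilpotent : Y ^+ M = 0.
Proof.
apply/matrixP => i j; rewrite mxE strictly_upper_exp_entry //.
by rewrite (leq_trans (ltn_ord j)) ?leq_addl.
Qed.

End StrictlyUpper.

Section LUTrick.
Variables (R : realType) (M : nat) (Q LQ UQ : 'M[R]_M).
Hypotheses (Q_unit : Q \in unitmx) (QLU : Q^T = LQ *m UQ).

Lemma lu_upper_unit : UQ \in unitmx.
Proof. by move: Q_unit; rewrite -unitmx_tr QLU unitmx_mul => /andP[]. Qed.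

Lemma lu_trick_strictly_upper : unit_lower_triangular LQ ->
  forall i j : 'I_M, (j <= i)%N -> (1%:M - invmx UQ^T *m Q) i j = 0.
Proof.
case=> LQ_lower LQ_diag.
have -> : invmx UQ^T *m Q = LQ^T.
  rewrite -[Q]trmxK QLU trmx_mul mulmxA mulVmx ?mul1mx //.
  by rewrite unitmx_tr lu_upper_unit.
move=> i j ji; rewrite !mxE.
have [->|ij] := eqVneq i j; first by rewrite LQ_diag subrr.
rewrite LQ_lower ?subrr //= ltn_neqAle ji andbT.
by apply: contra ij => /eqP ji'; apply/eqP/val_inj.
Qed.

End LUTrick.

Section KroneckerLift.
Variables (R : realType) (L M N : nat).
Local Notation C := R[i].

Lemma lift_mulmxV (U : 'M[R]_M) (A : 'M[C]_N) : U \in unitmx -> A \in unitmx ->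
  ((1%:M : 'M[C]_L) *t (cplx_mx U *t A)) *m (1%:M *t (cplx_mx (invmx U) *t invmx A))
  = 1%:M.
Proof.
move=> U_unit A_unit.
by rewrite !tensmx_mul mulmx1 mulmxV // -map_mxM mulmxV // map_mx1 !tensmx11.
Qed.

Lemma lift_smoother_limit_nilpotent (U Q : 'M[R]_M) (A : 'M[C]_N) k :
  A \in unitmx -> (M <= k)%N ->
  (forall i j : 'I_M, (j <= i)%N -> (1%:M - invmx U *m Q) i j = 0) ->
  (1%:M - ((1%:M : 'M[C]_L) *t (cplx_mx (invmx U) *t invmx A))
          *m (1%:M *t (cplx_mx Q *t A))) ^+ k = 0.
Proof.
move=> A_unit Mk Y_upper.
rewrite !tensmx_mul mulmx1 mulVmx // -map_mxM.
have -> : forall Y : 'M[R]_M, 1%:M - (1%:M : 'M[C]_L) *t (cplx_mx Y *t 1%:M)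
                              = 1%:M *t (cplx_mx (1%:M - Y) *t (1%:M : 'M[C]_N)).
  by move=> Y; rewrite /cplx_mx map_mxB map_mx1 tensmxBl tensmxBr !tensmx11.
have nilp : cplx_mx (1%:M - invmx U *m Q) ^+ M = 0.
  by apply: strictly_upper_nilpotent => i j ji; rewrite mxE Y_upper ?rmorph0.
rewrite !tensmx_exp -(subnK Mk) [cplx_mx _ ^+ _]exprD nilp mulr0.
by rewrite tens0mx tensmx0.
Qed.

End KroneckerLift.

Theorem theorem3 (R : realType) (L M N Mc Nc : nat)
  (tau : 'I_M -> R) (tauc : 'I_Mc -> R)
  (LQ UQ : 'M[R]_M) (LQc UQc : 'M[R]_Mc)
  (A : 'M[R[i]]_N) (Ac : 'M[R[i]]_Nc)
  (TFQ : 'M[R]_(Mc, M)) (TFA : 'M[R]_(Nc, N))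
  (TCQ : 'M[R]_(M, Mc)) (TCA : 'M[R]_(N, Nc)) :
  (0 < L)%N -> (0 < N)%N -> (0 < Nc)%N -> (Mc <= M)%N -> (Nc <= N)%N ->
  right_gauss_radau tau -> right_gauss_radau tauc ->
  (colloc_matrix tau)^T = LQ *m UQ ->
  unit_lower_triangular LQ -> upper_triangular UQ ->
  (colloc_matrix tauc)^T = LQc *m UQc ->
  unit_lower_triangular LQc -> upper_triangular UQc ->
  A \in unitmx -> Ac \in unitmx ->
  (subdiag_mx L *t Hmat Mc Nc) *m transfer L TFQ TFA
    = transfer L TFQ TFA *m (subdiag_mx L *t Hmat M N) ->
  forall k : nat, (M <= k)%N ->
  exists mu_star c : R, 0 < mu_star /\ 0 < c /\
    forall mu : R, mu_star < mu ->
      Phat L mu UQ^T A \in unitmx ->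
      Ptilde L mu UQc^T Ac \in unitmx ->
      spectral_radius
        (T_PFASST L mu k (colloc_matrix tau) UQ^T A UQc^T Ac
           (transfer L TFQ TFA) (transfer L TCQ TCA))
      <= c / mu.
Proof.
move=> _ _ _ _ _ GR GRc QLU LQ_lower _ QcLU _ _ A_unit Ac_unit _ k Mk.
have Q_unit := gauss_radau_colloc_unit GR.
have UQ_unit : UQ^T \in unitmx by rewrite unitmx_tr (lu_upper_unit Q_unit QLU).
have UQc_unit : UQc^T \in unitmx.
  by rewrite unitmx_tr (lu_upper_unit (gauss_radau_colloc_unit GRc) QcLU).
apply: (@two_level_spectral_radius_bound _ _ _ _
  (1%:M *t (cplx_mx (invmx UQ^T) *t invmx A)) _ _ _
  (1%:M *t (cplx_mx (invmx UQc^T) *t invmx Ac))).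
- exact: lift_mulmxV.
- exact: lift_mulmxV.
- exact: lift_smoother_limit_nilpotent (lu_trick_strictly_upper Q_unit QLU LQ_lower).
Qed.
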